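(* For every graph $G$ the following are equivalent. (1) $G$ is a pseudo-cograph. (2) $G$ is a cograph, or there is a vertex $v\in V(G)$ such that (B1) $G-v$ or $\overline{G-v}$ is disconnected, with $\mathfrak C$ the set of connected components of that disconnected graph; (B2) $G[V(H)\cup\{v\}]$ is a cograph for every $H\in\mathfrak C$; and (B3) all edges of the graph $\Gamma(G,v)$ are incident to one common vertex. (3) $G$ is a cograph, or there is a vertex $v\in V(G)$ such that (C1) $G-v$ or $\overline{G-v}$ is disconnected, with $\mathfrak C$ the set of connected components of that disconnected graph; and (C2) there is at least one and at most two components $H\in\mathfrak C$ such that both $G[V(H)\cup\{v\}]$ and $G[V(G)\setminus V(H)]$ are cographs.
   Context: Graphs finite, simple, undirected; $G[W]$ induced subgraph; $G-v$ is $G$ with $v$ deleted; $\overline H$ complement; the join of vertex-disjoint graphs adds all edges between them to the disjoint union; a cograph is a graph without induced $P_4$. $G$ is a pseudo-cograph if $|V(G)|\le2$ or there are induced subgraphs $G_1,G_2$ and $v\in V(G)$ with (F1) $V(G)=V(G_1)\cup V(G_2)$, $V(G_1)\cap V(G_2)=\{v\}$, $|V(G_1)|,|V(G_2)|>1$; (F2) $G_1,G_2$ cographs; (F3) $G-v$ is the join or the disjoint union of $G_1-v$ and $G_2-v$. Given $v$ and $\mathfrak C$ as in (B1), $\Gamma(G,v)$ is the undirected graph with vertex set $\mathfrak C$ in which $\{H,H'\}$ is an edge iff the subgraph of $G$ induced by $V(H)\cup V(H')\cup\{v\}$ contains an induced $P_4$. *)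

(* A finite simple graph G is a finite vertex type T with a
   symmetric irreflexive adjacency relation e : rel T; V(G) = T. *)
From mathcomp Require Import all_boot.
Set Implicit Arguments. Unset Strict Implicit. Unset Printing Implicit Defensive.

Section Graphs.
Variable T : finType.

Definition has_induced_P4 (e : rel T) (W : {set T}) : bool :=
  [exists a : T, exists b : T, exists c : T, exists d : T,
    [&& a \in W, b \in W, c \in W, d \in W, uniq [:: a; b; c; d],
        e a b, e b c, e c d, ~~ e a c, ~~ e b d & ~~ e a d]].

Definition cographW (e : rel T) (W : {set T}) : bool := ~~ has_induced_P4 e W.

Definition cograph (e : rel T) : bool := cographW e setT.

Definition restrict (r : rel T) (W : {set T}) : rel T :=
  [rel x y | [&& x \in W, y \in W & r x y]].

Definition components (r : rel T) (W : {set T}) : {set {set T}} :=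
  [set [set y in W | connect (restrict r W) x y] | x in W].

Definition disconnected (r : rel T) (W : {set T}) : Prop :=
  1 < #|components r W|.

Definition compl (e : rel T) : rel T := [rel x y | (x != y) && ~~ e x y].

Definition pseudo_cograph (e : rel T) : Prop :=
  #|T| <= 2 \/
  exists (W1 W2 : {set T}) (v : T),
    [/\ W1 :|: W2 = setT, W1 :&: W2 = [set v], 1 < #|W1| & 1 < #|W2|] /\
    (cographW e W1 /\ cographW e W2) /\
    ((forall x y, x \in W1 :\ v -> y \in W2 :\ v -> e x y) \/
     (forall x y, x \in W1 :\ v -> y \in W2 :\ v -> ~~ e x y)).

(* Conditions (B1)-(B3) for vertex v, where r is the adjacency relation of the
   graph whose disconnectedness is asserted (r = e for G-v, r = compl e for the
   complement of G-v); both graphs live on V(G) \ {v} = [set~ v]. *)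
Definition condB (e : rel T) (v : T) (r : rel T) : Prop :=
  let C := components r [set~ v] in
  disconnected r [set~ v] /\
  (forall H, H \in C -> cographW e (H :|: [set v])) /\
  (* every edge {H,H'} of Gamma(G,v) is incident to H0 *)
  (exists2 H0, H0 \in C &
     forall H H', H \in C -> H' \in C -> H != H' ->
       has_induced_P4 e (H :|: H' :|: [set v]) -> H0 = H \/ H0 = H').

Definition condC (e : rel T) (v : T) (r : rel T) : Prop :=
  let C := components r [set~ v] in
  disconnected r [set~ v] /\
  let good := [set H in C | cographW e (H :|: [set v]) && cographW e (~: H)] in
  1 <= #|good| <= 2.

End Graphs.

(* Complementing preserves induced P4s, so we may assume that G - v itself is
   disconnected.  An induced P4 of G either lies in H + v for a single component H
   of G - v, or it is a - v - c - d with a and c in different components H, H'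
   (a "bridge"), in which case {H, H'} is an edge of Gamma(G, v).  Hence, under (B2),
   G - H0 is a cograph exactly when H0 meets every edge of Gamma(G, v), and then
   G1 = H0 + v, G2 = G - H0 is a pseudo-cograph decomposition at v.  Conversely,
   each component of G - v lies on one side of such a decomposition, which forces
   (B2) and a common vertex of all edges of Gamma(G, v).  The components counted in
   (C2) are exactly these common vertices, so there are at most two of them unless
   G is a cograph.  Finally, a cograph is a pseudo-cograph by Seinsche's theorem:
   a cograph on at least two vertices is disconnected or has disconnected
   complement. *)

From mathcomp Require Import all_boot.
Set Implicit Arguments. Unset Strict Implicit. Unset Printing Implicit Defensive.

Section Components.
Variables (T : finType) (r : rel T).
Implicit Types (W H : {set T}) (x y : T).

Definition component W x : {set T} := [set y in W | connect (restrict r W) x y].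

Lemma connect_restrict1 W x y :
  x \in W -> y \in W -> r x y -> connect (restrict r W) x y.
Proof. by move=> xW yW rxy; apply: connect1; rewrite /restrict /= xW yW. Qed.

Lemma component_refl W x : x \in W -> x \in component W x.
Proof. by move=> xW; rewrite inE xW connect0. Qed.

Lemma component_in_components W x : x \in W -> component W x \in components r W.
Proof. exact: imset_f. Qed.

Lemma components_sub W H : H \in components r W -> H \subset W.
Proof. by case/imsetP=> x _ ->; apply/subsetP=> y; rewrite inE => /andP[]. Qed.

Lemma eq_disconnected r' W : r =2 r' -> disconnected r W -> disconnected r' W.
Proof.
move=> E; rewrite /disconnected; suff -> : components r W = components r' W by [].
apply: eq_imset => x; apply/setP=> y; rewrite !inE.
by congr (_ && _); apply: eq_connect=> a b; rewrite /restrict /= E.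
Qed.

Hypothesis r_sym : symmetric r.

Lemma connect_restrict_sym W : connect_sym (restrict r W).
Proof.
apply: sym_connect_sym => a b; rewrite /restrict /=.
by rewrite r_sym; case: (a \in W); case: (b \in W).
Qed.

Lemma component_eq W x y :
  connect (restrict r W) x y -> component W x = component W y.
Proof.
move=> cxy; apply/setP=> z; rewrite !inE; case: (z \in W) => //=.
apply/idP/idP; last exact: connect_trans.
by apply: connect_trans; rewrite connect_restrict_sym.
Qed.

Lemma componentsP W H u : H \in components r W -> u \in H -> H = component W u.
Proof. by case/imsetP=> x _ -> /[!inE] /andP[_]; apply: component_eq. Qed.

Lemma disconnectedP W :
  reflect (exists x y, [/\ x \in W, y \in W & ~~ connect (restrict r W) x y])
          (1 < #|components r W|).
Proof.
apply: (iffP card_gt1P).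
  move=> [_ [_ [/imsetP[x xW ->] /imsetP[y yW ->] ne]]].
  by exists x, y; split=> //; apply: contra ne => /component_eq E; apply/eqP.
move=> [x [y [xW yW nc]]]; exists (component W x), (component W y).
split; try exact: component_in_components.
apply: contraNneq nc => E; move: (component_refl yW).
by rewrite -E inE => /andP[].
Qed.

End Components.

Lemma connect_switch (T : finType) (r : rel T) (P : pred T) x y :
  connect r x y -> P x -> ~~ P y ->
  exists c d, [/\ connect r x c, r c d, P c & ~~ P d].
Proof.
move/connectP=> [p rp ->]; elim: p x rp => [|z p IH] x /=; first by move=> _ ->.
move=> /andP[xz rp] Px; have [Pz /(IH z rp Pz)|nPz _] := boolP (P z).
  case=> c [d [zc cd Pc nPd]]; exists c, d.
  by split=> //; apply: connect_trans (connect1 xz) zc.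
by exists x, z; rewrite connect0.
Qed.

Lemma card_gt1_neq (T : finType) (W : {set T}) (v : T) :
  1 < #|W| -> exists2 x, x \in W & x != v.
Proof.
case/card_gt1P=> [x [y [xW yW x_y]]].
by have [xv|] := eqVneq x v; [exists y; rewrite // -xv eq_sym | exists x].
Qed.

Section InducedP4.
Variables (T : finType) (g : rel T).
Implicit Types (W : {set T}) (a b c d : T).

Definition P4at W a b c d : bool :=
  [&& a \in W, b \in W, c \in W, d \in W, uniq [:: a; b; c; d],
      g a b, g b c, g c d, ~~ g a c, ~~ g b d & ~~ g a d].

Lemma P4P W : reflect (exists a b c d, P4at W a b c d) (has_induced_P4 g W).
Proof.
apply: (iffP existsP) => [[a /existsP[b /existsP[c /existsP[d H]]]]|[a [b [c [d H]]]]].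
  by exists a, b, c, d.
by exists a; apply/existsP; exists b; apply/existsP; exists c; apply/existsP; exists d.
Qed.

Lemma P4at_subset W W' a b c d :
  [/\ a \in W', b \in W', c \in W' & d \in W'] -> P4at W a b c d -> P4at W' a b c d.
Proof. by case=> aW bW cW dW /and5P[_ _ _ _ P]; rewrite /P4at aW bW cW dW. Qed.

Lemma P4_subset W W' : W \subset W' -> has_induced_P4 g W -> has_induced_P4 g W'.
Proof.
move=> /subsetP sWW' /P4P[a [b [c [d P]]]]; apply/P4P; exists a, b, c, d.
have /and5P[aW bW cW dW _] := P.
by apply: P4at_subset P; split; apply: sWW'.
Qed.

Lemma cographW_subset W W' : W \subset W' -> cographW g W' -> cographW g W.
Proof. by move=> sWW'; apply: contra; apply: P4_subset. Qed.

Lemma P4at_rev W a b c d : symmetric g -> P4at W a b c d -> P4at W d c b a.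
Proof.
move=> g_sym /and5P[aW bW cW dW /and5P[uniq_abcd ab bc cd /and3P[nac nbd nad]]].
have uniq_dcba : uniq [:: d; c; b; a] by rewrite -(rev_uniq [:: a; b; c; d]) in uniq_abcd.
by rewrite /P4at aW bW cW dW uniq_dcba (g_sym d c) (g_sym c b) (g_sym b a)
  (g_sym d b) (g_sym c a) (g_sym d a) ab bc cd nac nbd nad.
Qed.

End InducedP4.

Section Complement.
Variables (T : finType) (g : rel T).
Hypothesis g_sym : symmetric g.

Lemma compl_sym : symmetric (compl g).
Proof. by move=> x y; rewrite /compl /= eq_sym g_sym. Qed.

Lemma compl_irr : irreflexive (compl g).
Proof. by move=> x; rewrite /compl /= eqxx. Qed.

Lemma complK : irreflexive g -> compl (compl g) =2 g.
Proof.
move=> g_irr x y; rewrite /compl /=.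
by case: eqVneq => [->|_]; rewrite ?g_irr ?negbK.
Qed.

Lemma eq_P4 g' W : g =2 g' -> has_induced_P4 g W = has_induced_P4 g' W.
Proof.
move=> E; apply/P4P/P4P => -[a [b [c [d P]]]]; exists a, b, c, d;
  by move: P; rewrite /P4at !E.
Qed.

Lemma P4at_compl W a b c d : P4at g W a b c d -> P4at (compl g) W b d a c.
Proof.
move=> /and5P[aW bW cW dW /and5P[uniq_abcd ab bc cd /and3P[nac nbd nad]]].
move: uniq_abcd; rewrite /= !inE !negb_or => /and4P[/and3P[a_b a_c a_d] /andP[b_c b_d] c_d _].
rewrite /P4at /= aW bW cW dW !inE /compl /= (g_sym b a) (g_sym d c) (g_sym d a).
rewrite ab bc cd nac nbd nad (eq_sym b a) (eq_sym d a) (eq_sym d c).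
by rewrite (negbTE a_b) (negbTE a_c) (negbTE a_d) (negbTE b_c) (negbTE b_d) (negbTE c_d).
Qed.

End Complement.

Lemma P4_compl (T : finType) (g : rel T) W :
  symmetric g -> irreflexive g -> has_induced_P4 (compl g) W = has_induced_P4 g W.
Proof.
have P4_to_compl (h : rel T) : symmetric h -> has_induced_P4 h W -> has_induced_P4 (compl h) W.
  by move=> h_sym /P4P[a [b [c [d P]]]]; apply/P4P; exists b, d, a, c; apply: P4at_compl.
move=> g_sym g_irr; apply/idP/idP; last exact: P4_to_compl.
by move/(P4_to_compl _ (compl_sym g_sym)); rewrite (eq_P4 _ (complK g_irr)).
Qed.

Section Bridge.
Variables (T : finType) (g : rel T).
Hypotheses (g_sym : symmetric g) (g_irr : irreflexive g).
Implicit Types (W : {set T}) (v a c d : T).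

Definition bridge (W0 : {set T}) (v a c d : T) : Prop :=
  [/\ a \in W0, c \in W0, d \in W0, ~~ connect (restrict g W0) a c &
      [&& g v a, g v c, g c d & ~~ g v d]].

Lemma bridge_P4 (W0 : {set T}) W v a c d :
  v \notin W0 -> bridge W0 v a c d ->
  [/\ a \in W, v \in W, c \in W & d \in W] -> has_induced_P4 g W.
Proof.
move=> vW0 [aW0 cW0 dW0 nac /and4P[va vc cd nvd]] [aW vW cW dW].
have cdW0 := connect_restrict1 cW0 dW0 cd.
have nac' : ~~ g a c by apply: contra nac; apply: connect_restrict1.
have nad : ~~ g a d.
  apply: contra nac => ad; apply: connect_trans (connect_restrict1 aW0 dW0 ad) _.
  by rewrite (connect_restrict_sym g_sym).
have a_c : a != c by apply: contraNneq nac => ->.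
have a_d : a != d by apply: contraNneq nac => ->; rewrite (connect_restrict_sym g_sym).
have c_d : c != d by apply: contraTneq cd => ->; rewrite g_irr.
have [a_v c_v d_v] : [/\ a != v, v != c & v != d].
  by split; [apply: contraNneq vW0 => <- | apply: contraNneq vW0 => -> ..].
apply/P4P; exists a, v, c, d.
rewrite /P4at aW vW cW dW /= !inE !negb_or a_v a_c a_d c_v d_v c_d.
by rewrite (g_sym a) va vc cd nac' nvd nad.
Qed.

End Bridge.

Definition disjoint_split (T : finType) (g : rel T) (v : T) (W1 W2 : {set T}) : Prop :=
  [/\ W1 :|: W2 = setT, W1 :&: W2 = [set v], 1 < #|W1| & 1 < #|W2|] /\
  (cographW g W1 /\ cographW g W2) /\
  (forall x y, x \in W1 :\ v -> y \in W2 :\ v -> ~~ g x y).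

Section AtVertex.
Variables (T : finType) (g : rel T) (v : T).
Hypotheses (g_sym : symmetric g) (g_irr : irreflexive g).
Local Notation comp := (component g [set~ v]).
Local Notation comps := (components g [set~ v]).
Implicit Types (W H : {set T}) (x y a c d : T).

Definition component_cographs : Prop :=
  forall H, H \in comps -> cographW g (H :|: [set v]).

Definition gamma_center H0 : Prop :=
  forall H H', H \in comps -> H' \in comps -> H != H' ->
    has_induced_P4 g (H :|: H' :|: [set v]) -> H0 = H \/ H0 = H'.

Lemma notin_components H : H \in comps -> v \notin H.
Proof. by move/components_sub/subsetP=> sH; apply/negP=> /sH; rewrite !inE eqxx. Qed.

Lemma components_edge H x y :
  H \in comps -> x \in H -> y \in [set~ v] -> g x y -> y \in H.
Proof.
move=> HC xH yW0 xy; have xW0 := subsetP (components_sub HC) x xH.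
by rewrite (componentsP g_sym HC xH) inE yW0 connect_restrict1.
Qed.

Lemma P4_in_component W a b c d x : P4at g W a b c d -> x \in [set~ v] ->
  (forall y, y \in [:: a; b; c; d] -> (y == v) || connect (restrict g [set~ v]) x y) ->
  has_induced_P4 g (comp x :|: [set v]).
Proof.
move=> P xW0 near; apply/P4P; exists a, b, c, d; apply: P4at_subset P.
have near_in y : y \in [:: a; b; c; d] -> y \in comp x :|: [set v].
  by move/near; rewrite !inE; case: eqVneq => [->|_ /= ->]; rewrite ?eqxx ?orbT.
by split; apply: near_in; rewrite !inE eqxx ?orbT.
Qed.

Lemma P4at_through_v W a c d : P4at g W a v c d ->
  (exists2 x, x \in [set~ v] & has_induced_P4 g (comp x :|: [set v])) \/
  (exists a c d, [/\ a \in W, c \in W, d \in W & bridge g [set~ v] v a c d]).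
Proof.
move=> P; have /and5P[aW _ cW dW /and5P[uniq_avcd av vc cd /and3P[_ nvd _]]] := P.
move: uniq_avcd; rewrite /= !inE !negb_or => /and4P[/and3P[a_v _ _] /andP[v_c v_d] _ _].
have [aW0 cW0 dW0] : [/\ a \in [set~ v], c \in [set~ v] & d \in [set~ v]].
  by rewrite !inE a_v ![_ == v]eq_sym v_c v_d.
have cd0 := connect_restrict1 cW0 dW0 cd.
have [ac|nac] := boolP (connect (restrict g [set~ v]) a c).
  left; exists a => //; apply: P4_in_component P aW0 _ => y.
  by rewrite !inE => /or4P[] /eqP->; rewrite ?eqxx ?connect0 ?ac ?(connect_trans ac cd0) ?orbT.
by right; exists a, c, d; split=> //; split; rewrite // -(g_sym a) av vc cd.
Qed.

Lemma P4_localize W : has_induced_P4 g W ->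
  (exists2 x, x \in [set~ v] & has_induced_P4 g (comp x :|: [set v])) \/
  (exists a c d, [/\ a \in W, c \in W, d \in W & bridge g [set~ v] v a c d]).
Proof.
move=> /P4P[a [b [c [d P]]]].
have [bv|b_v] := eqVneq b v; first by apply: (@P4at_through_v _ a c d); rewrite -bv.
have [cv|c_v] := eqVneq c v.
  by apply: (@P4at_through_v _ d b a); rewrite -cv; apply: P4at_rev.
have /and5P[_ _ _ _ /and5P[_ ab bc cd _]] := P.
have [bW0 cW0] : b \in [set~ v] /\ c \in [set~ v] by rewrite !inE b_v c_v.
have bc0 := connect_restrict1 bW0 cW0 bc.
left; exists b => //; apply: P4_in_component P bW0 _ => y.
rewrite !inE => /or4P[] /eqP->; rewrite ?connect0 ?bc0 ?orbT //.
  by case: eqVneq => //= a_v; apply: connect_restrict1; rewrite // ?inE // g_sym.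
by case: eqVneq => //= d_v; apply: connect_trans bc0 (connect_restrict1 _ _ _); rewrite ?inE.
Qed.

Lemma P4_bridge W : component_cographs -> has_induced_P4 g W ->
  exists a c d, [/\ a \in W, c \in W, d \in W & bridge g [set~ v] v a c d].
Proof.
move=> cogs /P4_localize[[x xW0 P]|//].
by move: (cogs _ (component_in_components g xW0)); rewrite /cographW P.
Qed.

Lemma bridge_gamma_edge a c d : bridge g [set~ v] v a c d ->
  comp a != comp c /\ has_induced_P4 g (comp a :|: comp c :|: [set v]).
Proof.
move=> br; have [aW0 cW0 dW0 nac /and4P[_ _ cd _]] := br.
have [aa cc] := (component_refl g aW0, component_refl g cW0).
split.
  by apply: contra nac => /eqP E; move: cc; rewrite -E /component inE => /andP[].
apply: (bridge_P4 g_sym g_irr _ br); first by rewrite !inE eqxx.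
have dc : d \in comp c by rewrite /component inE dW0 connect_restrict1.
by rewrite !in_setU set11 aa cc dc !orbT.
Qed.

Lemma gamma_center_cographW_compl H0 :
  H0 \in comps -> cographW g (~: H0) -> gamma_center H0.
Proof.
move=> H0C cog H H' HC H'C _ P.
have [|n1] := eqVneq H0 H; first by left.
have [|n2] := eqVneq H0 H'; first by right.
have avoid K z : K \in comps -> H0 != K -> z \in K -> z \in ~: H0.
  move=> KC H0K zK; rewrite inE; apply: contra H0K => zH0; apply/eqP.
  by rewrite (componentsP g_sym H0C zH0) (componentsP g_sym KC zK).
move: cog; rewrite /cographW (P4_subset _ P) //; apply/subsetP=> z.
rewrite !in_setU in_set1 => /orP[/orP[]|/eqP->]; [exact: avoid | exact: avoid |].
by rewrite inE notin_components.
Qed.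

Lemma cographW_compl_gamma_center H0 :
  component_cographs -> gamma_center H0 -> cographW g (~: H0).
Proof.
move=> cogs center; apply/negP=> /(P4_bridge cogs)[a [c [d [aH cH _ br]]]].
have [aW0 cW0 _ _ _] := br; have [ne P] := bridge_gamma_edge br.
have [E|E] := center _ _ (component_in_components g aW0) (component_in_components g cW0) ne P.
  by move: aH; rewrite E inE component_refl.
by move: cH; rewrite E inE component_refl.
Qed.

Lemma components_connect H x y :
  H \in comps -> x \in H -> y \in H -> connect (restrict g [set~ v]) x y.
Proof. by move=> HC xH; rewrite (componentsP g_sym HC xH) inE => /andP[]. Qed.

Lemma component_split H0 :
  H0 \in comps -> disconnected g [set~ v] ->
  cographW g (H0 :|: [set v]) -> cographW g (~: H0) ->
  disjoint_split g v (H0 :|: [set v]) (~: H0).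
Proof.
move=> H0C dis cog1 cog2; have vH0 := notin_components H0C.
have [h hH0] : exists h, h \in H0.
  by case/imsetP: H0C => x xW0 ->; exists x; apply: component_refl.
have := subsetP (components_sub H0C) h hH0; rewrite !inE => h_v.
have [w w_v wH0] : exists2 w, w != v & w \notin H0.
  move/(disconnectedP g_sym): dis => [x [y [xW0 yW0 nxy]]]; rewrite !inE in xW0 yW0.
  have [xH0|] := boolP (x \in H0); last by exists x.
  by exists y => //; apply: contra nxy; apply: components_connect.
split; [split; try apply/card_gt1P | split; first by split].
- by apply/setP=> z; rewrite !inE; case: (z \in H0); rewrite ?orbT.
- apply/setP=> z; rewrite !inE.
  by case: eqVneq => [->|_]; rewrite ?vH0 ?orbT ?orbF ?andbN.
- by exists h, v; rewrite !inE hH0 eqxx h_v orbT; split.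
- by exists w, v; rewrite !inE wH0 vH0 w_v; split.
move=> x y; rewrite !inE => /andP[x_v xH0] /andP[y_v yH0]; apply: contra yH0.
by apply: components_edge; rewrite ?inE // -(orbF (x \in H0)) -(negbTE x_v).
Qed.

End AtVertex.

Section DisjointSplit.
Variables (T : finType) (g : rel T) (v : T) (W1 W2 : {set T}).
Hypotheses (g_sym : symmetric g) (g_irr : irreflexive g).
Hypothesis split : disjoint_split g v W1 W2.
Local Notation comp := (component g [set~ v]).
Local Notation comps := (components g [set~ v]).
Implicit Types (x y z a c d : T).

Let in_W1W2 z : (z \in W1) && (z \in W2) = (z == v).
Proof. by case: split => [[_ W1W2 _ _] _]; rewrite -in_setI W1W2 inE. Qed.

Let notin_W1 z : z \notin W1 -> z \in W2.
Proof.
case: split => [[/setP/(_ z) + _ _ _] _]; rewrite !inE => + zW1.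
by rewrite (negbTE zW1).
Qed.

Lemma split_side_connect x y :
  connect (restrict g [set~ v]) x y -> (x \in W1) = (y \in W1).
Proof.
apply: closed_connect => x' y' /and3P[]; rewrite !inE => x_v y_v xy.
have [[_ _ _ _] [_ no_edge]] := split.
have cross a b : a != v -> b != v -> a \in W1 -> b \notin W1 -> ~~ g a b.
  move=> a_v b_v aW1 bW1; apply: no_edge; rewrite in_setD1 ?a_v ?b_v //=.
  exact: notin_W1.
case: (boolP (x' \in W1)) => xW1; case: (boolP (y' \in W1)) => yW1 //.
  by move: (cross _ _ x_v y_v xW1 yW1); rewrite xy.
by move: (cross _ _ y_v x_v yW1 xW1); rewrite g_sym xy.
Qed.

Lemma split_component_sub x :
  x \in [set~ v] -> comp x :|: [set v] \subset (if x \in W1 then W1 else W2).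
Proof.
move=> xW0; apply/subsetP=> z; rewrite in_setU in_set1 => /orP[|/eqP->].
  rewrite inE => /andP[_ /split_side_connect xz].
  by case: ifP => xW1; rewrite -?xz ?xW1 // notin_W1 // -xz xW1.
by move: (in_W1W2 v); rewrite eqxx => /andP[vW1 vW2]; case: ifP.
Qed.

Lemma split_component_cographs : component_cographs g v.
Proof.
move=> H /imsetP[x xW0 ->]; apply: cographW_subset (split_component_sub xW0) _.
by have [_ [[cog1 cog2] _]] := split; case: ifP.
Qed.

Lemma split_bridge a c d : bridge g [set~ v] v a c d -> (a \in W1) != (c \in W1).
Proof.
move=> br; have [aW0 cW0 _ _ _] := br; apply/negP => /eqP same.
have [_ [[cog1 cog2] _]] := split.
have cogS : cographW g (if a \in W1 then W1 else W2) by case: ifP.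
have /subsetP sa := split_component_sub aW0.
have /subsetP sc := split_component_sub cW0; rewrite -same in sc.
have [_ P] := bridge_gamma_edge g_sym g_irr br.
move: cogS; rewrite /cographW (P4_subset _ P) //; apply/subsetP=> z.
rewrite !in_setU => /orP[/orP[za|zc]|zv]; [apply: sa | apply: sc | apply: sa];
  by rewrite in_setU ?za ?zc ?zv ?orbT.
Qed.

Lemma split_disconnected : disconnected g [set~ v].
Proof.
have [[_ _ c1 c2] _] := split.
have [x xW1 x_v] := card_gt1_neq v c1; have [y yW2 y_v] := card_gt1_neq v c2.
apply/(disconnectedP g_sym); exists x, y; rewrite !inE x_v y_v; split=> //.
apply/negP => /split_side_connect; rewrite xW1 => /esym yW1.
by move: (in_W1W2 y); rewrite yW1 yW2 (negbTE y_v).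
Qed.

(* Among the components of a, c and x0, two lie on the same side of the split,
   and each pair of them carries a bridge. *)
Lemma split_gamma_center_mixed x0 y0 :
  x0 \in [set~ v] -> y0 \in [set~ v] -> g v x0 -> g x0 y0 -> ~~ g v y0 ->
  gamma_center g v (comp x0).
Proof.
move=> x0W0 y0W0 vx0 x0y0 nvy0 H H' HC H'C _.
move=> /(P4_bridge g_sym split_component_cographs)[a [c [d [aH cH _ br]]]].
have [|n1] := eqVneq (comp x0) H; first by left.
have [|n2] := eqVneq (comp x0) H'; first by right.
have far u : u \in H :|: H' :|: [set v] -> u \in [set~ v] ->
    ~~ connect (restrict g [set~ v]) u x0.
  rewrite !in_setU in_set1 => /orP[/orP[uK|uK]|/eqP->]; last by rewrite !inE eqxx.
  - move=> _; apply: contra n1 => /(component_eq g_sym) <-.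
    by rewrite (componentsP g_sym HC uK).
  - move=> _; apply: contra n2 => /(component_eq g_sym) <-.
    by rewrite (componentsP g_sym H'C uK).
have bridge_x0 z : z \in H :|: H' :|: [set v] -> z \in [set~ v] -> g v z ->
    bridge g [set~ v] v z x0 y0.
  by move=> zK zW0 vz; split; rewrite ?vz ?vx0 ?x0y0 ?nvy0 ?far.
have [aW0 cW0 _ _ /and4P[va vc _ _]] := br.
have := split_bridge br; have := split_bridge (bridge_x0 a aH aW0 va).
have := split_bridge (bridge_x0 c cH cW0 vc).
by case: (a \in W1); case: (c \in W1); case: (x0 \in W1).
Qed.

Lemma split_gamma_center : exists2 H0, H0 \in comps & gamma_center g v H0.
Proof.
have [/existsP[x0 /existsP[y0 /and5P[x0W0 y0W0 vx0 x0y0 nvy0]]]|no_mixed] := boolP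
  [exists x0, exists y0,
     [&& x0 \in [set~ v], y0 \in [set~ v], g v x0, g x0 y0 & ~~ g v y0]].
  exists (comp x0); first exact: component_in_components.
  exact: split_gamma_center_mixed x0W0 y0W0 vx0 x0y0 nvy0.
have /card_gt0P[H0 H0C] := ltnW split_disconnected.
exists H0 => // H H' _ _ _ /(P4_bridge g_sym split_component_cographs).
move=> [a [c [d [_ _ _ [_ cW0 dW0 _ /and4P[_ vc cd nvd]]]]]].
by move/existsP: no_mixed; case; exists c; apply/existsP; exists d; rewrite cW0 dW0 vc cd.
Qed.

End DisjointSplit.

Section Conditions.
Variables (T : finType) (g : rel T) (v : T).
Hypotheses (g_sym : symmetric g) (g_irr : irreflexive g).
Local Notation comp := (component g [set~ v]).

Lemma disjoint_split_condB W1 W2 : disjoint_split g v W1 W2 -> condB g v g.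
Proof.
move=> split; split; first exact: split_disconnected split.
by split; [apply: split_component_cographs split | apply: split_gamma_center split].
Qed.

Lemma condB_disjoint_split : condB g v g -> exists W1 W2, disjoint_split g v W1 W2.
Proof.
move=> [dis [cogs [H0 H0C center]]].
exists (H0 :|: [set v]), (~: H0); apply: component_split => //; first exact: cogs.
exact: cographW_compl_gamma_center cogs center.
Qed.

Lemma condC_disjoint_split : condC g v g -> exists W1 W2, disjoint_split g v W1 W2.
Proof.
move=> [dis] /andP[/card_gt0P[H0]]; rewrite inE => /and3P[H0C cog1 cog2] _.
by exists (H0 :|: [set v]), (~: H0); apply: component_split.
Qed.

Lemma condB_cographW_or_condC : condB g v g -> cographW g setT \/ condC g v g.
Proof.
move=> [dis [cogs [H0 H0C center]]].
have [|/negPn P] := boolP (cographW g setT); [by left | right; split=> //].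
have [a [c [d [_ _ _ br]]]] := P4_bridge g_sym cogs P.
have [aW0 cW0 _ _ _] := br; have [ne Pac] := bridge_gamma_edge g_sym g_irr br.
apply/andP; split.
  apply/card_gt0P; exists H0; rewrite inE H0C cogs //=.
  exact: cographW_compl_gamma_center cogs center.
apply: leq_trans (_ : #|[set comp a; comp c]| <= 2); last first.
  by rewrite cards2; case: (_ != _).
apply: subset_leq_card; apply/subsetP=> H; rewrite inE => /and3P[HC _ cog].
have [<-|<-] := gamma_center_cographW_compl g_sym HC cog
  (component_in_components g aW0) (component_in_components g cW0) ne Pac.
  by rewrite !inE eqxx.
by rewrite !inE eqxx orbT.
Qed.

Lemma cographW_condB : cographW g setT -> disconnected g [set~ v] -> condB g v g.
Proof.
move=> cog dis; split=> //; split.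
  by move=> H _; apply: cographW_subset cog; apply: subsetT.
have /card_gt0P[H0 H0C] := ltnW dis.
by exists H0 => // H H' _ _ _ P; move: cog; rewrite /cographW (P4_subset _ P) ?subsetT.
Qed.

End Conditions.

Section SameP4.
Variables (T : finType) (g g' : rel T).
Hypothesis same_P4 : forall W, has_induced_P4 g W = has_induced_P4 g' W.

Lemma condB_same_P4 v r : condB g v r -> condB g' v r.
Proof.
move=> [dis [cogs [H0 H0C center]]]; split=> //; split.
  by move=> H HC; rewrite /cographW -same_P4; apply: cogs.
by exists H0 => // H H' HC H'C ne; rewrite -same_P4; apply: center.
Qed.

Lemma condC_same_P4 v r : condC g v r -> condC g' v r.
Proof.
move=> [dis good]; split; first exact: dis.
suff -> : [set H in components r [set~ v] |
           cographW g' (H :|: [set v]) && cographW g' (~: H)] =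
          [set H in components r [set~ v] |
           cographW g (H :|: [set v]) && cographW g (~: H)] by [].
by apply/setP=> H; rewrite !in_set /cographW !same_P4.
Qed.

End SameP4.

Section ExtendByVertex.
Variables (T : finType) (g : rel T) (W : {set T}) (v : T).
Hypotheses (g_sym : symmetric g) (g_irr : irreflexive g) (vW : v \in W).
Local Notation W' := (W :\ v).
Implicit Types (x y u : T).

Let W'W : W' \subset W. Proof. exact: subD1set. Qed.

Lemma disconnected_nonadjacent_component u :
  u \in W' -> (forall y, y \in component g W' u -> ~~ g v y) -> disconnected g W.
Proof.
move=> uW' nonadj; apply/(disconnectedP g_sym); exists u, v.
split=> //; first exact: subsetP W'W u uW'.
have cl : closed (restrict g W) (component g W' u).
  apply: (intro_closed (connect_restrict_sym g_sym W)) => a b /and3P[_ bW ab] aK.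
  have b_v : b != v by apply: contraTneq ab => ->; rewrite g_sym (negbTE (nonadj a aK)).
  have bW' : b \in W' by rewrite in_setD1 b_v.
  move: aK; rewrite inE => /andP[aW' ua]; rewrite inE bW'.
  exact: connect_trans ua (connect_restrict1 aW' bW' ab).
by apply/negP => /(closed_connect cl); rewrite component_refl // !inE eqxx.
Qed.

Lemma compl_disconnected_universal u :
  u \in W' -> (forall y, y \in W' -> g v y) -> disconnected (compl g) W.
Proof.
move=> uW' adj; apply/(disconnectedP (compl_sym g_sym)); exists u, v.
split=> //; first exact: subsetP W'W u uW'.
have cl : closed (restrict (compl g) W) [set v].
  apply: (intro_closed (connect_restrict_sym (compl_sym g_sym) W)).
  move=> a b /and3P[_ bW /andP[a_b nab]]; rewrite !inE => /eqP av; subst a.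
  by apply: contraNT nab => b_v; apply: adj; rewrite in_setD1 b_v.
apply/negP => /(closed_connect cl); rewrite !inE eqxx.
by move: uW'; rewrite !inE => /andP[/negbTE->].
Qed.

(* A non-neighbour x of v next to a neighbour in its component gives an edge
   c - d leaving the neighbourhood; a neighbour z in another component then
   yields the induced P4  z - v - c - d. *)
Lemma cographW_universal_vertex : cographW g W -> disconnected g W' ->
  (forall u, u \in W' -> exists2 y, y \in component g W' u & g v y) ->
  forall x, x \in W' -> g v x.
Proof.
move=> cog dis adj x xW'; apply/negPn/negP => nvx.
have [y] := adj x xW'; rewrite inE => /andP[yW' xy] vy.
have yx : connect (restrict g W') y x by rewrite (connect_restrict_sym g_sym).
have [c [d [yc /and3P[cW' dW' cd] vc nvd]]] := connect_switch yx vy nvx.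
have [w wW' nxw] : exists2 w, w \in W' & ~~ connect (restrict g W') x w.
  move/(disconnectedP g_sym): dis => [p [q [pW' qW' npq]]].
  have [xp|] := boolP (connect (restrict g W') x p); last by exists p.
  exists q => //; apply: contra npq => xq.
  by apply: connect_trans xq; rewrite (connect_restrict_sym g_sym).
have [z] := adj w wW'; rewrite inE => /andP[zW' wz] vz.
have nzc : ~~ connect (restrict g W') z c.
  apply: contra nxw => zc; apply: connect_trans (connect_trans xy yc) _.
  by rewrite (connect_restrict_sym g_sym) (connect_trans wz zc).
move/negP: cog; apply.
apply: (bridge_P4 g_sym g_irr (W0 := W') (v := v) (a := z) (c := c) (d := d)).
- by rewrite !inE eqxx.
- by split; rewrite ?vz ?vc ?cd.
- by split; rewrite // (subsetP W'W).
Qed.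

Lemma cographW_disconnected_extend : cographW g W ->
  disconnected g W' \/ #|W'| = 1 -> disconnected g W \/ disconnected (compl g) W.
Proof.
move=> cog hyp.
have [u0 u0W'] : exists u, u \in W'.
  case: hyp => [/(disconnectedP g_sym)[x [_ [xW' _ _]]]|/eqP/cards1P[s ->]].
    by exists x.
  by exists s; rewrite inE.
have [/existsP[u /andP[uW' /forallP nonadj]]|] :=
  boolP [exists u in W', [forall y in component g W' u, ~~ g v y]].
  by left; apply: (disconnected_nonadjacent_component uW') => y; apply/implyP.
move/existsPn=> adj_comp; right; apply: (compl_disconnected_universal u0W').
have adj u : u \in W' -> exists2 y, y \in component g W' u & g v y.
  move=> uW'; move/(_ u): adj_comp; rewrite uW' => /forallPn[y].
  by rewrite negb_imply negbK => /andP[]; exists y.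
case: hyp => [dis|/eqP/cards1P[s Es]]; first exact: cographW_universal_vertex.
have sW' : s \in W' by rewrite Es inE.
move=> x; rewrite Es inE => /eqP->; have [y] := adj s sW'.
by rewrite inE Es inE => /andP[/eqP->].
Qed.

End ExtendByVertex.

Lemma cographW_disconnected_or_compl (T : finType) (g : rel T) (W : {set T}) :
  symmetric g -> irreflexive g -> 1 < #|W| -> cographW g W ->
  disconnected g W \/ disconnected (compl g) W.
Proof.
move=> g_sym g_irr; have [n] := ubnP #|W|; elim: n W => // n IH W Wn W1 cog.
have [v vW] : exists v, v \in W by apply/card_gt0P; apply: ltnW.
have cardW : #|W| = #|W :\ v|.+1 by rewrite (cardsD1 v) vW.
have [W'1|W'1] := eqVneq #|W :\ v| 1.
  exact: cographW_disconnected_extend g_sym g_irr vW cog (or_intror W'1).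
have cog' : cographW g (W :\ v) by apply: cographW_subset cog; apply: subD1set.
have [||dis|dis] := IH (W :\ v) _ _ cog'.
- by rewrite -ltnS -cardW.
- by move: W1 W'1; rewrite cardW; case: #|W :\ v| => [|[]].
- exact: cographW_disconnected_extend g_sym g_irr vW cog (or_introl dis).
have cogc : cographW (compl g) W by rewrite /cographW P4_compl.
have [|d] := cographW_disconnected_extend (compl_sym g_sym) (@compl_irr _ g) vW cogc
  (or_introl dis); first by right.
by left; apply: eq_disconnected d; apply: complK.
Qed.

Lemma setI1_neq (T : finType) (W1 W2 : {set T}) (v x y : T) :
  W1 :&: W2 = [set v] -> x \in W1 :\ v -> y \in W2 :\ v -> x != y.
Proof.
move=> /setP/(_ x) I /setD1P[x_v xW1]; apply: contraTneq => <-.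
by apply/negP=> /setD1P[_ xW2]; move: I; rewrite !inE xW1 xW2 (negbTE x_v).
Qed.

Section PseudoCograph.
Variables (T : finType) (e : rel T).
Hypotheses (e_sym : symmetric e) (e_irr : irreflexive e).

Lemma cographW_compl W : cographW (compl e) W = cographW e W.
Proof. by rewrite /cographW P4_compl. Qed.

Lemma condB_compl v r : condB (compl e) v r <-> condB e v r.
Proof. by split; apply: condB_same_P4 => W; rewrite P4_compl. Qed.

Lemma condC_compl v r : condC (compl e) v r <-> condC e v r.
Proof. by split; apply: condC_same_P4 => W; rewrite P4_compl. Qed.

(* A join of G_1 - v and G_2 - v is a disjoint union in the complement. *)
Definition vertex_split v W1 W2 : Prop :=
  disjoint_split e v W1 W2 \/ disjoint_split (compl e) v W1 W2.

Lemma pseudo_cographP :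
  pseudo_cograph e <-> #|T| <= 2 \/ exists v W1 W2, vertex_split v W1 W2.
Proof.
have compl_across v W1 W2 x y : W1 :&: W2 = [set v] ->
    x \in W1 :\ v -> y \in W2 :\ v -> compl e x y = ~~ e x y.
  by move=> I xW1 yW2; rewrite /compl /= (setI1_neq I xW1 yW2).
split=> [[small|[W1 [W2 [v [sizes [[cog1 cog2] [join|union]]]]]]]|].
- by left.
- right; exists v, W1, W2; right; split=> //; rewrite !cographW_compl; split=> //.
  have [_ I _ _] := sizes.
  by move=> x y xW1 yW2; rewrite (compl_across _ _ _ _ _ I xW1 yW2) join.
- by right; exists v, W1, W2; left.
move=> [small|[v [W1 [W2 [[sizes [cogs union]]|[sizes [cogs cunion]]]]]]].
- by left.
- by right; exists W1, W2, v; split=> //; split=> //; right.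
right; exists W1, W2, v; split=> //; split; first by rewrite -!(cographW_compl).
left=> x y xW1 yW2; have [_ I _ _] := sizes.
by move: (cunion x y xW1 yW2); rewrite (compl_across _ _ _ _ _ I xW1 yW2) negbK.
Qed.

Lemma condB_vertex_split v :
  condB e v e \/ condB e v (compl e) <-> exists W1 W2, vertex_split v W1 W2.
Proof.
split=> [[/(condB_disjoint_split e_sym e_irr)|/(condB_compl v (compl e)).2]|].
- by move=> [W1 [W2 split]]; exists W1, W2; left.
- move/(condB_disjoint_split (compl_sym e_sym) (@compl_irr _ e)) => [W1 [W2 split]].
  by exists W1, W2; right.
move=> [W1 [W2 [split|split]]]; first by left; apply: disjoint_split_condB split.
right; apply: (condB_compl v (compl e)).1.
exact: (disjoint_split_condB (compl_sym e_sym) (@compl_irr _ e) split).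
Qed.

Lemma condC_vertex_split v :
  condC e v e \/ condC e v (compl e) -> exists W1 W2, vertex_split v W1 W2.
Proof.
case=> [/(condC_disjoint_split e_sym)|/(condC_compl v (compl e)).2
  /(condC_disjoint_split (compl_sym e_sym))] [W1 [W2 split]].
- by exists W1, W2; left.
- by exists W1, W2; right.
Qed.

Lemma condB_cograph_or_condC v : condB e v e \/ condB e v (compl e) ->
  cograph e \/ condC e v e \/ condC e v (compl e).
Proof.
case=> [/(condB_cographW_or_condC e_sym e_irr)[|C]|]; [by left | by right; left |].
move/(condB_compl v (compl e)).2/(condB_cographW_or_condC (compl_sym e_sym) (@compl_irr _ e)).
by rewrite cographW_compl => -[|/(condC_compl v (compl e)).1]; [left | right; right].
Qed.

Lemma small_cograph : #|T| <= 2 -> cograph e.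
Proof.
move=> T2; apply/negP=> /P4P[a [b [c [d /and5P[_ _ _ _ /and5P[uniq_abcd _ _ _ _]]]]]].
have := max_card (mem [:: a; b; c; d]).
by rewrite (card_uniqP uniq_abcd) => /leq_trans/(_ T2).
Qed.

(* Every vertex v works: by Seinsche's theorem G - v or its complement is
   disconnected, and (B2), (B3) hold trivially in a cograph. *)
Lemma cograph_pseudo_cograph : cograph e -> pseudo_cograph e.
Proof.
move=> cog; apply/pseudo_cographP; have [|T2] := leqP #|T| 2; [by left | right].
have [v _] : exists v, v \in [set: T] by apply/card_gt0P; rewrite cardsT (leq_trans _ T2).
have gt1 : 1 < #|[set~ v]| by move: T2; rewrite cardsC1; case: #|T| => [|[|[]]].
have cogc : cographW (compl e) setT by rewrite cographW_compl.
exists v; apply/condB_vertex_split.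
have [dis|dis] := cographW_disconnected_or_compl e_sym e_irr gt1
  (cographW_subset (subsetT _) cog); [left | right; apply: (condB_compl v (compl e)).1].
  exact: cographW_condB cog dis.
exact: cographW_condB cogc dis.
Qed.

End PseudoCograph.

Unset Implicit Arguments.

Theorem mainTheorem12 (T : finType) (e : rel T)
  (e_sym : symmetric e) (e_irr : irreflexive e) :
  (pseudo_cograph e <->
     (cograph e \/ exists v : T, condB e v e \/ condB e v (compl e))) /\
  ((cograph e \/ exists v : T, condB e v e \/ condB e v (compl e)) <->
     (cograph e \/ exists v : T, condC e v e \/ condC e v (compl e))).
Proof.
have pseudo_B : pseudo_cograph e <->
    (cograph e \/ exists v : T, condB e v e \/ condB e v (compl e)).
  apply: iff_trans (pseudo_cographP e_sym e_irr) _; split.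
    case=> [/small_cograph|[v split]]; first by left.
    by right; exists v; apply/(condB_vertex_split e_sym e_irr).
  case=> [/(cograph_pseudo_cograph e_sym e_irr)/(pseudo_cographP e_sym e_irr) //|[v B]].
  by right; exists v; apply/(condB_vertex_split e_sym e_irr).
split=> //; split=> [[cog|[v /(condB_cograph_or_condC e_sym e_irr)[cog|C]]]|].
- by left.
- by left.
- by right; exists v.
case=> [cog|[v /(condC_vertex_split e_sym e_irr) split]]; first by left.
by apply/pseudo_B/(pseudo_cographP e_sym e_irr); right; exists v.
Qed.
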